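(* Let $X_\sigma$ be the root monoid associated with a cone $\sigma$, a $k$-dimensional regular face $\tau$ with primitive ray generators $p_1,\ldots,p_k$, and a compatible set of Demazure roots $\{e_1^{(r)},e_2^{(r)}\}_{r=1}^k$. Then the set of idempotents of $X_\sigma$ is invariant under each one-parameter subgroup $R_{p_i}$, $i=1,\ldots,k$; in particular it is invariant under $R_\tau=\langle R_{p_1},\ldots,R_{p_k}\rangle$.
   Context: $\mathbb{K}$ algebraically closed of characteristic zero; $N$ lattice, $M$ dual, $S_\sigma=\sigma^\vee\cap M$, $X_\sigma=\operatorname{Spec}\bigoplus_{u\in S_\sigma}\mathbb{K}\chi^u$ with torus $\mathbb{T}=\operatorname{Hom}(M,\mathbb{K}^\times)$. Regular face: primitive ray generators extend to a basis of $N$. A Demazure root for ray generator $p_i$ of $\sigma$: $e\in M$ with $\langle p_i,e\rangle=-1$ and $\langle p_j,e\rangle\ge0$ for other ray generators. Compatibility with $\tau$: $\langle p_s,e_1^{(r)}\rangle=\langle p_s,e_2^{(r)}\rangle=-\delta_{rs}$. Root monoid multiplication: $\chi^u(x*y)=\sum_{\bar i+\bar j=\langle\bar p,u\rangle}\prod_r\binom{\langle p_r,u\rangle}{i_r}\chi^{u+\sum_ri_re_2^{(r)}}(x)\chi^{u+\sum_rj_re_1^{(r)}}(y)$, $\langle\bar p,u\rangle=(\langle p_1,u\rangle,\ldots,\langle p_k,u\rangle)$. An idempotent is $x$ with $x*x=x$. For $p\in N$, $R_p$ is the one-parameter subgroup of $\mathbb{T}$ with $\chi^u(R_p(s)x)=s^{\langle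 p,u\rangle}\chi^u(x)$. *)

From HB Require Import structures.
From mathcomp Require Import all_boot all_order all_algebra.
Set Implicit Arguments. Unset Strict Implicit. Unset Printing Implicit Defensive.
Import Order.TTheory GRing.Theory Num.Theory.
Local Open Scope ring_scope.

(* Lattice N = Z^n, dual M = Z^n, both as row vectors 'rV[int]_n. *)
Definition pair n (p u : 'rV[int]_n) : int := \sum_(j < n) p ord0 j * u ord0 j.

Definition in_cone n (P : seq 'rV[int]_n) (v : 'rV[int]_n) : Prop :=
  exists c : 'rV[int]_n -> rat, (forall w, 0 <= c w) /\
    map_mx intr v = \sum_(w <- P) c w *: map_mx intr w.

Definition primitive n (v : 'rV[int]_n) : Prop :=
  forall d : nat, (forall j, (d%:Z %| v ord0 j)%Z) -> d = 1%N.

(* P is the list of primitive ray generators of a strongly convex rational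
   polyhedral cone sigma = cone(P). *)
Definition ray_generators n (P : seq 'rV[int]_n) : Prop :=
  [/\ uniq P,
      forall v, v \in P -> primitive v,
      forall v, v \in P -> ~ in_cone (rem v P) v &
      forall c : 'rV[int]_n -> rat, (forall w, 0 <= c w) ->
        \sum_(w <- P) c w *: map_mx intr w = 0 :> 'rV[rat]_n ->
        forall w, w \in P -> c w = 0].

Definition inS n (P : seq 'rV[int]_n) (u : 'rV[int]_n) : Prop :=
  forall w, w \in P -> 0 <= pair w u.

(* p_1..p_k are exactly the primitive ray generators of a face tau of sigma *)
Definition face_rays n k (P : seq 'rV[int]_n) (p : 'I_k -> 'rV[int]_n) : Prop :=
  (forall r, p r \in P) /\ injective p /\
  exists m : 'rV[int]_n, inS P m /\
    forall v, v \in P -> (pair v m = 0 <-> exists r, v = p r).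

Definition regular_rays n k (p : 'I_k -> 'rV[int]_n) : Prop :=
  exists (B : 'M[int]_n) (f : 'I_k -> 'I_n),
    injective f /\ B \in unitmx /\ forall r, row (f r) B = p r.

Definition demazure_root n (P : seq 'rV[int]_n) (v e : 'rV[int]_n) : Prop :=
  pair v e = -1 /\ forall w, w \in P -> w != v -> 0 <= pair w e.

Definition compatible n k (p e1 e2 : 'I_k -> 'rV[int]_n) : Prop :=
  forall r s, pair (p s) (e1 r) = - ((r == s)%:R) /\
              pair (p s) (e2 r) = - ((r == s)%:R).

(* K-points of X_sigma = Spec K[S_sigma]: monoid homs S_sigma -> (K, mult),
   x u = chi^u(x) (values outside S_sigma are irrelevant). *)
Definition is_point (K : fieldType) n (P : seq 'rV[int]_n) (x : 'rV[int]_n -> K) : Prop :=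
  x 0 = 1 /\ forall u v, inS P u -> inS P v -> x (u + v) = x u * x v.

Definition dd n k (p : 'I_k -> 'rV[int]_n) (u : 'rV[int]_n) (r : 'I_k) : nat :=
  `|pair (p r) u|%N.

Definition DD n k (p : 'I_k -> 'rV[int]_n) (u : 'rV[int]_n) : nat :=
  \max_(r < k) dd p u r.

(* chi^u(x * y) in the root monoid *)
Definition rmul (K : fieldType) n k (p e1 e2 : 'I_k -> 'rV[int]_n)
    (x y : 'rV[int]_n -> K) (u : 'rV[int]_n) : K :=
  \sum_(i : {ffun 'I_k -> 'I_(DD p u).+1} | [forall r, (i r <= dd p u r)%N])
    (\prod_(r < k) ('C(dd p u r, i r))%:R) *
    x (u + \sum_(r < k) (e2 r *+ i r)) *
    y (u + \sum_(r < k) (e1 r *+ (dd p u r - i r))).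

Definition rm_idempotent (K : fieldType) n k (P : seq 'rV[int]_n)
    (p e1 e2 : 'I_k -> 'rV[int]_n) (x : 'rV[int]_n -> K) : Prop :=
  is_point P x /\ forall u, inS P u -> rmul p e1 e2 x x u = x u.

Definition Ract (K : fieldType) n (q : 'rV[int]_n) (s : K) (x : 'rV[int]_n -> K)
  : 'rV[int]_n -> K := fun u => s ^ (pair q u) * x u.

From HB Require Import structures.
From mathcomp Require Import all_boot all_order all_algebra.
From mathcomp Require Import ring.
Set Implicit Arguments. Unset Strict Implicit. Unset Printing Implicit Defensive.
Import Order.TTheory GRing.Theory Num.Theory.
Local Open Scope ring_scope.

(* An element (s_r) of R_tau multiplies chi^u by the character
   c(u) = prod_r s_r^<p_r,u>.  By compatibility c(e_1^(r)) = c(e_2^(r)) = s_r^-1,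
   so in the product formula for chi^u(x * x), where the two arguments are
   shifted by sum_r i_r e_2^(r) and sum_r j_r e_1^(r) with i_r + j_r = <p_r,u>,
   every summand gets multiplied by c(u)^2 prod_r s_r^-<p_r,u> = c(u), the same
   factor as chi^u(x).  Hence the torus twist preserves idempotents; R_{p_i} is
   the subtorus with s_r = 1 for r <> i. *)

Lemma pairD n (q a b : 'rV[int]_n) : pair q (a + b) = pair q a + pair q b.
Proof. by rewrite /pair -big_split; apply: eq_bigr => j _; rewrite !mxE mulrDr. Qed.

Lemma pair0 n (q : 'rV[int]_n) : pair q 0 = 0.
Proof. by rewrite /pair big1 // => j _; rewrite mxE mulr0. Qed.

Lemma pair_dd n k (P : seq 'rV[int]_n) (p : 'I_k -> 'rV[int]_n) u r :
  p r \in P -> inS P u -> pair (p r) u = (dd p u r)%:Z.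
Proof. by move=> Ppr Su; rewrite /dd gez0_abs //; apply: Su. Qed.

Lemma rm_idempotent_eq (K : fieldType) n k (P : seq 'rV[int]_n)
    (p e1 e2 : 'I_k -> 'rV[int]_n) (x y : 'rV[int]_n -> K) :
  x =1 y -> rm_idempotent P p e1 e2 x -> rm_idempotent P p e1 e2 y.
Proof.
move=> xy [[x0 xD] xx]; split; [split|] => [|u v Su Sv|u Su]; rewrite -!xy //.
  exact: xD.
by rewrite -(xx u Su); apply: eq_bigr => i _; rewrite -!xy.
Qed.

Section Twist.

Variables (K : fieldType) (n : nat) (c : 'rV[int]_n -> K).
Hypotheses (c0 : c 0 = 1) (cD : {morph c : a b / a + b >-> a * b}).

Lemma char_sum I (r : seq I) (F : I -> 'rV[int]_n) :
  c (\sum_(i <- r) F i) = \prod_(i <- r) c (F i).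
Proof. exact: big_morph. Qed.

Lemma char_mulrn a m : c (a *+ m) = c a ^+ m.
Proof. by elim: m => [|m IH]; rewrite ?mulr0n ?expr0 // mulrS exprS cD IH. Qed.

Lemma is_point_twist (P : seq 'rV[int]_n) (x : 'rV[int]_n -> K) :
  is_point P x -> is_point P (fun u => c u * x u).
Proof.
case=> x0 xD; split=> [|u v Su Sv]; first by rewrite c0 x0 mulr1.
by rewrite cD xD // mulrACA.
Qed.

Variables (k : nat) (p e1 e2 : 'I_k -> 'rV[int]_n) (t : 'I_k -> K).
Hypotheses (ce1 : forall r, c (e1 r) = t r) (ce2 : forall r, c (e2 r) = t r).

Lemma rmul_twist (x y : 'rV[int]_n -> K) u :
  rmul p e1 e2 (fun v => c v * x v) (fun v => c v * y v) u
  = c u ^+ 2 * \prod_(r < k) t r ^+ dd p u r * rmul p e1 e2 x y u.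
Proof.
rewrite /rmul mulr_sumr; apply: eq_bigr => i /forallP le_i_dd.
rewrite !cD !char_sum.
have -> : \prod_(r < k) t r ^+ dd p u r
    = \prod_(r < k) c (e2 r *+ i r) * \prod_(r < k) c (e1 r *+ (dd p u r - i r)).
  rewrite -big_split; apply: eq_bigr => r _.
  by rewrite /= !char_mulrn ce1 ce2 -exprD subnKC.
ring.
Qed.

Lemma rm_idempotent_twist (P : seq 'rV[int]_n) (x : 'rV[int]_n -> K) :
  (forall u, inS P u -> c u * \prod_(r < k) t r ^+ dd p u r = 1) ->
  rm_idempotent P p e1 e2 x -> rm_idempotent P p e1 e2 (fun u => c u * x u).
Proof.
move=> cu [xP xx]; split=> [|u Su]; first exact: is_point_twist.
by rewrite rmul_twist xx // expr2 -(mulrA (c u)) cu // mulr1.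
Qed.

End Twist.

Section TorusCharacter.

Variables (K : fieldType) (n k : nat) (p : 'I_k -> 'rV[int]_n) (s : 'I_k -> K).
Hypothesis s_neq0 : forall r, s r != 0.

Definition torus_char (u : 'rV[int]_n) : K := \prod_(r < k) s r ^ pair (p r) u.

Lemma torus_char0 : torus_char 0 = 1.
Proof. by rewrite /torus_char big1 // => r _; rewrite pair0 expr0z. Qed.

Lemma torus_charD : {morph torus_char : a b / a + b >-> a * b}.
Proof.
by move=> a b; rewrite /torus_char -big_split; apply: eq_bigr => r _; rewrite pairD expfzDr.
Qed.

Lemma torus_char_root (e : 'rV[int]_n) r :
  (forall r', pair (p r') e = - ((r == r')%:R)) -> torus_char e = (s r)^-1.
Proof.
move=> pe; rewrite /torus_char (bigD1 r) //= pe eqxx exprN1 big1 ?mulr1 // => r' r'r.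
by rewrite pe eq_sym (negbTE r'r) oppr0 expr0z.
Qed.

Lemma torus_char_cancel (P : seq 'rV[int]_n) u :
  (forall r, p r \in P) -> inS P u ->
  torus_char u * \prod_(r < k) (s r)^-1 ^+ dd p u r = 1.
Proof.
move=> pP Su; rewrite /torus_char -big_split big1 // => r _ /=.
by rewrite (pair_dd (pP r) Su) -exprMn divff // expr1n.
Qed.

Lemma rm_idempotent_torus (P : seq 'rV[int]_n) (e1 e2 : 'I_k -> 'rV[int]_n) x :
  (forall r, p r \in P) -> compatible p e1 e2 ->
  rm_idempotent P p e1 e2 x ->
  rm_idempotent P p e1 e2 (fun u => torus_char u * x u).
Proof.
move=> pP pe; apply: (rm_idempotent_twist torus_char0 torus_charD (t := fun r => (s r)^-1)).
- by move=> r; apply: torus_char_root => r'; case: (pe r r').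
- by move=> r; apply: torus_char_root => r'; case: (pe r r').
- by move=> u; apply: torus_char_cancel.
Qed.

End TorusCharacter.

Lemma Ract_torus_char (K : fieldType) n k (p : 'I_k -> 'rV[int]_n) i (s : K) x :
  Ract (p i) s x =1 fun u => torus_char p (fun r => if r == i then s else 1) u * x u.
Proof.
move=> u; rewrite /Ract /torus_char (bigD1 i) //= eqxx big1 ?mulr1 // => r /negbTE ->.
exact: exp1rz.
Qed.

Theorem mainTheorem8 (K : closedFieldType) (n k : nat)
    (P : seq 'rV[int]_n) (p e1 e2 : 'I_k -> 'rV[int]_n) :
  [pchar K] =i pred0 ->
  ray_generators P ->
  face_rays P p ->
  regular_rays p ->
  (forall r, demazure_root P (p r) (e1 r) /\ demazure_root P (p r) (e2 r)) ->
  compatible p e1 e2 ->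
  forall x : 'rV[int]_n -> K, rm_idempotent P p e1 e2 x ->
    (forall (i : 'I_k) (s : K), s != 0 ->
       rm_idempotent P p e1 e2 (Ract (p i) s x)) /\
    (forall s : 'I_k -> K, (forall r, s r != 0) ->
       rm_idempotent P p e1 e2 (fun u => (\prod_(r < k) s r ^ pair (p r) u) * x u)).
Proof.
move=> _ _ [pP _] _ _ pe x xx; split=> [i s s_neq0 | s s_neq0].
- apply: rm_idempotent_eq (fsym (Ract_torus_char p i s x)) _.
  by apply: rm_idempotent_torus => // r; case: (r == i); rewrite ?oner_neq0.
- exact: rm_idempotent_torus.
Qed.
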